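(* Let $G=(\mathscr{V},\mathscr{E},m,\theta)$ be a bi-partite weighted graph and $V:\mathscr{V}\to[0,\infty)$. The following are equivalent: (i) $\langle f,(d_G(Q)-V(Q))f\rangle\le\langle f,\Delta_{\mathscr{E},\theta}f\rangle$ for all $f\in\mathcal{C}_c(\mathscr{V})$; (ii) $\langle f,\Delta_{\mathscr{E},\theta}f\rangle\le\langle f,(d_G(Q)+V(Q))f\rangle$ for all $f\in\mathcal{C}_c(\mathscr{V})$; (iii) $|\langle f,\mathcal{A}_{\mathscr{E},\theta}f\rangle|\le\langle f,V(Q)f\rangle$ for all $f\in\mathcal{C}_c(\mathscr{V})$, where $(\mathcal{A}_{\mathscr{E},\theta}f)(x):=m^{-2}(x)\sum_{y\in\mathscr{V}}\mathscr{E}(x,y)e^{i\theta(x,y)}f(y)$ is the magnetic adjacency matrix.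
   Context: A weighted graph $G=(\mathscr{V},\mathscr{E},m,\theta)$: $\mathscr{V}$ countable, $\mathscr{E}:\mathscr{V}\times\mathscr{V}\to[0,\infty)$ symmetric, $m:\mathscr{V}\to(0,\infty)$, $\theta:\mathscr{V}\times\mathscr{V}\to[-\pi,\pi]$ antisymmetric; $x\sim y$ iff $\mathscr{E}(x,y)\neq0$; assumed locally finite, connected, without loops. Bi-partite: $\mathscr{V}$ can be partitioned into two subsets such that no two vertices in the same subset are neighbors. In $\ell^2(\mathscr{V},m^2)$ (inner product $\sum_x m^2(x)\overline{f(x)}g(x)$), $\Delta_{\mathscr{E},\theta}$ acts on finitely supported $f$ by $(\Delta_{\mathscr{E},\theta}f)(x)=m^{-2}(x)\sum_y\mathscr{E}(x,y)(f(x)-e^{i\theta(x,y)}f(y))$; $d_G(x)=m^{-2}(x)\sum_y\mathscr{E}(x,y)$; $W(Q)$ is multiplication by $W$; $\mathcal{C}_c(\mathscr{V})$ = finitely supported functions. *)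

From mathcomp Require Import all_boot all_order all_algebra.
From mathcomp Require Import all_classical all_reals all_analysis.
From mathcomp Require Import complex.
Set Implicit Arguments. Unset Strict Implicit. Unset Printing Implicit Defensive.
Import Order.TTheory GRing.Theory Num.Theory.
Local Open Scope classical_set_scope.
Local Open Scope ring_scope.
Local Open Scope complex_scope.

Section WGraph.
Variables (R : realType) (V : countType).
Variables (E : V -> V -> R) (m : V -> R) (theta : V -> V -> R).

Definition adj (x y : V) : bool := E x y != 0.

Definition weighted_graph : Prop :=
  (forall x y, E x y = E y x) /\
  (forall x y, 0 <= E x y) /\
  (forall x, 0 < m x) /\
  (forall x y, theta x y = - theta y x) /\
  (forall x y, - pi <= theta x y <= pi) /\
  (forall x, exists s : seq V, forall y, adj x y -> y \in s) /\
  (forall x y, exists p : seq V, path adj x p && (last x p == y)) /\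
  (forall x, E x x = 0).

Definition bipartite : Prop :=
  exists P : V -> bool, forall x y, adj x y -> P x != P y.

Definition fin_supp (f : V -> R[i]) : Prop :=
  exists s : seq V, forall x, x \notin s -> f x = 0.

Definition expi (t : R) : R[i] := (cos t) +i* (sin t).

Definition ip (f g : V -> R[i]) : R[i] :=
  \sum_(x \in [set: V]) ((m x ^+ 2)%:C * (f x)^* * g x).

Definition mlap (f : V -> R[i]) (x : V) : R[i] :=
  ((m x ^+ 2)^-1)%:C *
    \sum_(y \in [set: V]) ((E x y)%:C * (f x - expi (theta x y) * f y)).

Definition madj (f : V -> R[i]) (x : V) : R[i] :=
  ((m x ^+ 2)^-1)%:C *
    \sum_(y \in [set: V]) ((E x y)%:C * expi (theta x y) * f y).

Definition degG (x : V) : R :=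
  (m x ^+ 2)^-1 * \sum_(y \in [set: V]) E x y.

(* multiplication operator W(Q) *)
Definition mulop (W : V -> R) (f : V -> R[i]) (x : V) : R[i] := (W x)%:C * f x.

End WGraph.

From mathcomp Require Import all_boot all_order all_algebra.
From mathcomp Require Import all_classical all_reals all_analysis.
From mathcomp Require Import complex ring.
Import Order.TTheory GRing.Theory Num.Theory.
Local Open Scope ring_scope.
Local Open Scope complex_scope.

(* Since [Delta = d_G - A] and [<f, A f>] is real, (i) says [<f, A f> <= <f, V f>]
   and (ii) says [- <f, V f> <= <f, A f>]; together they are (iii).  A
   bipartition [P] yields the unitary [f |-> (-1)^P f], which commutes with
   [V(Q)] and anticommutes with [A], so (i) for all [f] is (ii) for all [f]. *)

Lemma fsbigT_seq (R : Type) (idx : R) (op : Monoid.com_law idx) (T : choiceType)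
    (r : seq T) (F : T -> R) :
  uniq r -> (forall i, i \notin r -> F i = idx) ->
  \big[op/idx]_(i \in [set: T]) F i = \big[op/idx]_(i <- r) F i.
Proof.
move=> ur Fr; rewrite (fsbigE r) //= => [|i _ /Fr //].
by apply: eq_bigl => i; rewrite in_setT.
Qed.
Arguments fsbigT_seq {R idx op T} r {F}.

Lemma conjc_expi (R : realType) (t : R) : (expi t)^* = expi (- t).
Proof. by rewrite /expi cosN sinN. Qed.

Section WeightedGraph.
Variables (R : realType) (V : countType).
Implicit Types (f g h : V -> R[i]) (W : V -> R).

Lemma fin_supp_uniq f :
  fin_supp f -> exists2 r, uniq r & forall x, x \notin r -> f x = 0.
Proof.
case=> s fs; exists (undup s) => [|x]; first exact: undup_uniq.
by rewrite mem_undup; exact: fs.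
Qed.

Section InnerProduct.
Variable m : V -> R.

Lemma ip_seq f r : uniq r -> (forall x, x \notin r -> f x = 0) ->
  forall g, ip m f g = \sum_(x <- r) (m x ^+ 2)%:C * (f x)^* * g x.
Proof.
move=> ur fr g; rewrite /ip (fsbigT_seq r) // => x /fr ->.
by rewrite raddf0 mulr0 mul0r.
Qed.
Arguments ip_seq f {r}.

Lemma ipDr f g h : fin_supp f ->
  ip m f (fun x => g x + h x) = ip m f g + ip m f h.
Proof.
case/fin_supp_uniq=> r ur fr; rewrite !(ip_seq f ur fr) -big_split.
by apply: eq_bigr => x _ /=; ring.
Qed.

Lemma ipBr f g h : fin_supp f ->
  ip m f (fun x => g x - h x) = ip m f g - ip m f h.
Proof.
case/fin_supp_uniq=> r ur fr; rewrite !(ip_seq f ur fr) -sumrB.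
by apply: eq_bigr => x _ /=; ring.
Qed.

Lemma ip_mulopD W1 W2 f : fin_supp f ->
  ip m f (mulop (fun x => W1 x + W2 x) f) = ip m f (mulop W1 f) + ip m f (mulop W2 f).
Proof.
move=> fs; rewrite -ipDr //; congr (ip m f _); apply: boolp.funext => x.
by rewrite /mulop rmorphD mulrDl.
Qed.

Lemma ip_mulopB W1 W2 f : fin_supp f ->
  ip m f (mulop (fun x => W1 x - W2 x) f) = ip m f (mulop W1 f) - ip m f (mulop W2 f).
Proof.
move=> fs; rewrite -ipBr //; congr (ip m f _); apply: boolp.funext => x.
by rewrite /mulop rmorphB mulrBl.
Qed.

End InnerProduct.
Arguments ip_seq m f {r}.

Variables (E : V -> V -> R) (m : V -> R) (theta : V -> V -> R).

(* The sums over [[set: V]] are finitely supported sums, worth [0] when the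
   support is infinite; local finiteness at [x] makes those in [mlap], [madj]
   and [degG] genuine. *)
Lemma mlapE f x :
  (exists s : seq V, forall y, adj E x y -> y \in s) ->
  mlap E m theta f x = (degG E m x)%:C * f x - madj E m theta f x.
Proof.
case=> s sE; have E0 y : y \notin undup s -> E x y = 0.
  by rewrite mem_undup => ys; apply/eqP; apply: contraNT ys; exact: sE.
have us := undup_uniq s.
rewrite /mlap /madj /degG !(fsbigT_seq (undup s) us); last 3 first.
- by move=> y /E0 ->; rewrite !mul0r.
- by move=> y /E0 ->.
- by move=> y /E0 ->; rewrite mul0r.
rewrite rmorphM raddf_sum -mulrA -mulrBr mulr_suml -sumrB; congr (_ * _).
by apply: eq_bigr => y _; ring.
Qed.

Definition madj_term f x y :=
  (f x)^* * ((E x y)%:C * expi (theta x y) * f y).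

Hypothesis m_gt0 : forall x, 0 < m x.

Lemma ip_madj_seq f r :
  uniq r -> (forall x, x \notin r -> f x = 0) ->
  ip m f (madj E m theta f) = \sum_(x <- r) \sum_(y <- r) madj_term f x y.
Proof.
move=> ur fr; rewrite (ip_seq m f ur fr); apply: eq_bigr => x _.
have mV : (m x ^+ 2)%:C * ((m x ^+ 2)^-1)%:C = 1 :> R[i].
  by rewrite -rmorphM mulfV ?rmorph1 // expf_neq0 // gt_eqF.
rewrite /madj (fsbigT_seq r) => [|//|y /fr ->]; last by rewrite mulr0.
by rewrite -mulrA mulrCA [(m x ^+ 2)%:C * _]mulrA mV mul1r mulr_sumr.
Qed.
Arguments ip_madj_seq f {r}.

Hypothesis Esym : forall x y, E x y = E y x.
Hypothesis thetaN : forall x y, theta x y = - theta y x.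

Lemma conjc_madj_term f x y : (madj_term f x y)^* = madj_term f y x.
Proof.
rewrite /madj_term !(conjc_is_multiplicative R).1 conjcK conjc_real conjc_expi.
by rewrite Esym -thetaN; ring.
Qed.

Lemma ip_madj_real f : fin_supp f ->
  ip m f (madj E m theta f) \is Num.real.
Proof.
case/fin_supp_uniq=> r ur fr; rewrite CrealE (ip_madj_seq f ur fr).
rewrite raddf_sum exchange_big /=; apply/eqP/eq_bigr => y _.
by rewrite raddf_sum; apply: eq_bigr => x _; exact: conjc_madj_term.
Qed.

Hypothesis E_locfin : forall x, exists s : seq V, forall y, adj E x y -> y \in s.

Lemma ip_mlap f : fin_supp f ->
  ip m f (mlap E m theta f) = ip m f (mulop (degG E m) f) - ip m f (madj E m theta f).
Proof.
move=> fs; rewrite -ipBr //; congr (ip m f _); apply: boolp.funext => x.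
exact: mlapE.
Qed.

Variable P : V -> bool.
Hypothesis P_bipartition : forall x y, adj E x y -> P x != P y.

Definition signflip f x := if P x then f x else - f x.

Lemma signflip_supp {f} {r : seq V} : (forall x, x \notin r -> f x = 0) ->
  forall x, x \notin r -> signflip f x = 0.
Proof. by move=> fr x /fr; rewrite /signflip => ->; case: (P x); rewrite ?oppr0. Qed.

Lemma fin_supp_signflip f : fin_supp f -> fin_supp (signflip f).
Proof. by case=> s fs; exists s; exact: signflip_supp. Qed.

Lemma ip_mulop_signflip W f : fin_supp f ->
  ip m (signflip f) (mulop W (signflip f)) = ip m f (mulop W f).
Proof.
case/fin_supp_uniq=> r ur fr.
rewrite (ip_seq m f ur fr) (ip_seq m _ ur (signflip_supp fr)).
by apply: eq_bigr => x _; rewrite /mulop /signflip; case: (P x); rewrite ?raddfN; ring.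
Qed.

Lemma ip_madj_signflip f : fin_supp f ->
  ip m (signflip f) (madj E m theta (signflip f)) = - ip m f (madj E m theta f).
Proof.
case/fin_supp_uniq=> r ur fr.
rewrite (ip_madj_seq f ur fr) (ip_madj_seq _ ur (signflip_supp fr)) -sumrN.
apply: eq_bigr => x _; rewrite -sumrN; apply: eq_bigr => y _.
rewrite /madj_term /signflip; have [->|/P_bipartition] := eqVneq (E x y) 0.
  by rewrite rmorph0 !(mul0r, mulr0) oppr0.
by case: (P x); case: (P y) => // _; rewrite ?raddfN; ring.
Qed.

Lemma mlap_bounds_tfae W :
  [<-> (forall f : V -> R[i], fin_supp f ->
          ip m f (mulop (fun x => degG E m x - W x) f) <= ip m f (mlap E m theta f));
       (forall f : V -> R[i], fin_supp f ->
          ip m f (mlap E m theta f) <= ip m f (mulop (fun x => degG E m x + W x) f));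
       (forall f : V -> R[i], fin_supp f ->
          `|ip m f (madj E m theta f)| <= ip m f (mulop W f))].
Proof.
have lower f : fin_supp f ->
    (ip m f (mulop (fun x => degG E m x - W x) f) <= ip m f (mlap E m theta f))
    = (ip m f (madj E m theta f) <= ip m f (mulop W f)).
  by move=> fs; rewrite ip_mulopB // ip_mlap // lerD2l lerN2.
have upper f : fin_supp f ->
    (ip m f (mlap E m theta f) <= ip m f (mulop (fun x => degG E m x + W x) f))
    = (- ip m f (mulop W f) <= ip m f (madj E m theta f)).
  by move=> fs; rewrite ip_mulopD // ip_mlap // lerD2l lerNl.
split; [|split] => H f fs; have fs' := fin_supp_signflip f fs.
- have := H _ fs'; rewrite upper // lower // ip_madj_signflip // ip_mulop_signflip //.
  by rewrite lerNl.
- rewrite real_ler_norml ?ip_madj_real // -upper // H //=.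
  have := H _ fs'; rewrite upper // ip_madj_signflip // ip_mulop_signflip //.
  by rewrite lerN2.
- by rewrite lower //; exact: real_ler_normlW (ip_madj_real f fs) (H f fs).
Qed.

End WeightedGraph.

Theorem proposition3p1 (R : realType) (V : countType)
  (E : V -> V -> R) (m : V -> R) (theta : V -> V -> R) (W : V -> R) :
  weighted_graph E m theta -> bipartite E -> (forall x, 0 <= W x) ->
  [<-> (forall f : V -> R[i], fin_supp f ->
          ip m f (mulop (fun x => degG E m x - W x) f) <= ip m f (mlap E m theta f));
       (forall f : V -> R[i], fin_supp f ->
          ip m f (mlap E m theta f) <= ip m f (mulop (fun x => degG E m x + W x) f));
       (forall f : V -> R[i], fin_supp f ->
          `|ip m f (madj E m theta f)| <= ip m f (mulop W f))].
Proof.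
move=> [Esym [_ [m_gt0 [thetaN [_ [E_locfin _]]]]]] [P P_bipartition] _.
exact: (@mlap_bounds_tfae _ _ _ _ _ m_gt0 Esym thetaN E_locfin _ P_bipartition W).
Qed.
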